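(* Let $p\ge1$ and $m\ge0$ be integers, $\nu\in[0,1/2]$, and $\delta_{p,\nu}=1+\nu/p^2$. Then $$\|T_p^{(m)}\|_{L^\infty(-\delta_{p,\nu},\delta_{p,\nu})}\le\frac{p^{2m}e^{\nu}}{\prod_{\ell=0}^{m-1}(2\ell+1)}.$$ For $x=1+\varepsilon\in[1,\delta_{p,\nu}]$ and $p\ge m+1$, $$T_p^{(m)}(x)\ge\Big(1+\frac{p^2-m^2}{2m+1}\varepsilon\Big)\prod_{\ell=0}^{m-1}\frac{p^2-\ell^2}{2\ell+1}.$$ Moreover $T_p(\delta_{p,\nu})\ge1+\nu$.
   Context: $T_p$ denotes the Chebyshev polynomial of the first kind of degree $p$ ($T_p(\cos\theta)=\cos(p\theta)$), and $T_p^{(m)}$ its $m$-th derivative; empty products equal $1$. *)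

From HB Require Import structures.
From mathcomp Require Import all_boot all_order all_algebra.
From mathcomp Require Import all_classical all_reals all_analysis.
Set Implicit Arguments. Unset Strict Implicit. Unset Printing Implicit Defensive.
Import Order.TTheory GRing.Theory Num.Theory.
Local Open Scope ring_scope.

(* Chebyshev polynomials of the first kind, via the three-term recurrence
   T_0 = 1, T_1 = X, T_{n+2} = 2 X T_{n+1} - T_n  (so T_n(cos t) = cos(n t)). *)
Fixpoint cheb_pair (R : nzRingType) (n : nat) : {poly R} * {poly R} :=
  match n with
  | 0%N => (1, 'X)
  | n'.+1 => let pr := cheb_pair R n' in (pr.2, 2%:R *: 'X * pr.2 - pr.1)
  end.

Definition chebT (R : nzRingType) (n : nat) : {poly R} := (cheb_pair R n).1.

From HB Require Import structures.
From mathcomp Require Import all_boot all_order all_algebra.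
From mathcomp Require Import all_classical all_reals all_analysis.
From mathcomp Require Import ring lra.
Import Order.TTheory GRing.Theory Num.Theory.
Local Open Scope ring_scope.

(* Write a_k = T_p^(k)(1).  The proof rests on three facts.
   1. (Algebra.)  T_{n+1}' = (n+1) U_n for the Chebyshev polynomials U_n of
      the second kind, and (1 - X^2) T_n' = n (X T_n - T_{n+1}).  Over an
      integral domain this gives Chebyshev's equation, and differentiating
      it k times and evaluating at 1 gives (2k+1) a_{k+1} = (p^2 - k^2) a_k,
      hence the product formula for a_m and a_{k+1} <= p^2/(2k+1) a_k.
   2. (Positivity.)  Since U_n = 2 T_n + U_{n-2}, every derivative of T_p is
      a nonnegative combination of the T_j.  As |T_j| <= 1 = T_j(1) on [-1, 1]
      and |T_j(x)| <= T_j(|x|) for |x| >= 1, such a polynomial q satisfies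
      |q(x)| <= q(1 + e) for e = max(0, |x| - 1); in particular a_k >= 0.
   3. (Taylor at 1.)  T_p^(m)(1+e) = sum_i a_{m+i} e^i / i!, a sum of
      nonnegative terms for e >= 0, so it lies between a_m + a_{m+1} e and
      a_m exp(p^2 e).
   The sup bound follows from 2 and 3 with e = max(0, |x| - 1) <= nu/p^2, the
   lower bound is 3 combined with 1, and T_p(delta) >= 1 + nu is its case m = 0. *)

Lemma nat_ind2 (P : nat -> Prop) :
  P 0%N -> P 1%N -> (forall n, P n -> P n.+1 -> P n.+2) -> forall n, P n.
Proof.
move=> P0 P1 PSS n; suff: P n /\ P n.+1 by case.
by elim: n => [|n [Pn Pn1]]; split => //; apply: PSS.
Qed.

Lemma deriv1 (R : nzSemiRingType) : (1 : {poly R})^`() = 0.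
Proof. by rewrite -polyC1 derivC. Qed.

Lemma derivn_add (R : nzSemiRingType) (q : {poly R}) m i :
  q^`(m + i) = q^`(m)^`(i).
Proof. by elim: i => [|i IH]; rewrite ?addn0 ?derivn0 // addnS !derivnS IH. Qed.

Section ChebyshevAlgebra.
Variable R : comNzRingType.
Local Notation T := (chebT R).

Lemma chebT0 : T 0 = 1. Proof. by []. Qed.
Lemma chebT1 : T 1 = 'X. Proof. by []. Qed.
Lemma chebTSS n : T n.+2 = 2%:R * 'X * T n.+1 - T n.
Proof. by rewrite /chebT /= scaler_nat mulr_natl. Qed.

Fixpoint chebU_pair (n : nat) : {poly R} * {poly R} :=
  match n with
  | 0%N => (1, 2%:R * 'X)
  | n'.+1 => let pr := chebU_pair n' in (pr.2, 2%:R * 'X * pr.2 - pr.1)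
  end.
Definition chebU n := (chebU_pair n).1.
Local Notation U := chebU.

Lemma chebU0 : U 0 = 1. Proof. by []. Qed.
Lemma chebU1 : U 1 = 2%:R * 'X. Proof. by []. Qed.
Lemma chebUSS n : U n.+2 = 2%:R * 'X * U n.+1 - U n. Proof. by []. Qed.

(* A solution of the Chebyshev recurrence with zero initial values vanishes;
   this turns identities between T and U into finite checks. *)
Lemma cheb_recurrence_zero (S : nat -> {poly R}) :
  S 0%N = 0 -> S 1%N = 0 -> (forall n, S n.+2 = 2%:R * 'X * S n.+1 - S n) ->
  forall n, S n = 0.
Proof. by move=> S0 S1 SSS; apply: nat_ind2 => // n Sn Sn1; rewrite SSS Sn Sn1; ring. Qed.

Lemma chebT_XU n : T n.+2 = 'X * U n.+1 - U n.
Proof.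
apply/eqP; rewrite -subr_eq0; apply/eqP.
apply: (@cheb_recurrence_zero (fun n => T n.+2 - ('X * U n.+1 - U n))) => [||k].
- by rewrite chebTSS chebT1 chebT0 chebU1 chebU0; ring.
- by rewrite !chebTSS chebUSS chebT1 chebT0 chebU1 chebU0; ring.
- by rewrite [T k.+4]chebTSS [U k.+3]chebUSS [U k.+2]chebUSS; ring.
Qed.

(* U_{n+2} = 2 T_{n+2} + U_n: unrolling it writes U_n as a nonnegative
   combination of Chebyshev polynomials of the first kind. *)
Lemma chebU_T n : U n.+2 = 2%:R * T n.+2 + U n.
Proof.
apply/eqP; rewrite -subr_eq0; apply/eqP.
apply: (@cheb_recurrence_zero (fun n => U n.+2 - (2%:R * T n.+2 + U n))) => [||k].
- by rewrite chebTSS chebUSS chebT1 chebT0 chebU1 chebU0; ring.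
- by rewrite !chebTSS !chebUSS chebT1 chebT0 chebU1 chebU0; ring.
- by rewrite [U k.+4]chebUSS [T k.+4]chebTSS [U k.+2]chebUSS; ring.
Qed.

Lemma deriv_2X_mul (q : {poly R}) :
  (2%:R * 'X * q)^`() = 2%:R * q + 2%:R * 'X * q^`().
Proof.
have d2 : (2%:R : {poly R})^`() = 0 by rewrite -polyC_natr derivC.
by rewrite !derivM derivX d2; ring.
Qed.

Lemma deriv_chebT n : (T n.+1)^`() = U n *+ n.+1.
Proof.
elim/nat_ind2: n => [||n IH0 IH1]; first by rewrite chebT1 derivX chebU0.
  by rewrite chebTSS derivB deriv_2X_mul chebT1 chebT0 derivX deriv1 chebU1; ring.
by rewrite chebTSS derivB deriv_2X_mul IH1 IH0 chebT_XU chebUSS; ring.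
Qed.

Lemma chebT_deriv_identity n :
  (1 - 'X * 'X) * (T n)^`() = ('X * T n - T n.+1) *+ n.
Proof.
elim/nat_ind2: n => [||n IH0 IH1].
- by rewrite chebT0 deriv1 mulr0 mulr0n.
- by rewrite chebTSS chebT1 chebT0 derivX; ring.
have dTSS : (T n.+2)^`() = 2%:R * T n.+1 + 2%:R * 'X * (T n.+1)^`() - (T n)^`().
  by rewrite chebTSS derivB deriv_2X_mul.
transitivity (2%:R * (1 - 'X * 'X) * T n.+1 +
   2%:R * 'X * ((1 - 'X * 'X) * (T n.+1)^`()) - (1 - 'X * 'X) * (T n)^`()).
  by rewrite dTSS; ring.
by rewrite IH0 IH1 [T n.+3]chebTSS chebTSS; ring.
Qed.

Lemma chebT_hornerSS n (x : R) :
  (T n.+2).[x] = 2 * x * (T n.+1).[x] - (T n).[x].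
Proof. by rewrite chebTSS !hornerE. Qed.

Lemma chebT_at1 n : (T n).[1] = 1.
Proof.
elim/nat_ind2: n => [||n IH0 IH1]; first by rewrite chebT0 hornerE.
  by rewrite chebT1 hornerX.
by rewrite chebT_hornerSS IH0 IH1; ring.
Qed.

Lemma chebT_opp n (x : R) : (T n).[- x] = (-1) ^+ n * (T n).[x].
Proof.
elim/nat_ind2: n => [||n IH0 IH1]; first by rewrite chebT0 !hornerE; ring.
  by rewrite chebT1 !hornerX expr1 mulN1r.
by rewrite !chebT_hornerSS IH0 IH1 !exprS; ring.
Qed.

End ChebyshevAlgebra.

Section ChebyshevEquation.
Variable R : idomainType.
Local Notation T := (chebT R).

(* Chebyshev's differential equation (1 - X^2) T'' - X T' + n^2 T = 0, obtained
   by differentiating chebT_deriv_identity and cancelling the factor 1 - X^2. *)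
Lemma chebT_ode n :
  (1 - 'X * 'X) * (T n)^`()^`() - 'X * (T n)^`() + T n *+ (n * n) = 0.
Proof.
have onemX2_neq0 : (1 - 'X * 'X : {poly R}) != 0.
  apply/eqP => /(congr1 (horner^~ 0)) /eqP.
  by rewrite !hornerE subr0 oner_eq0.
have dIdentity : - ('X *+ 2) * (T n)^`() + (1 - 'X * 'X) * (T n)^`()^`() =
                 (T n + 'X * (T n)^`() - (T n.+1)^`()) *+ n.
  have := congr1 deriv (chebT_deriv_identity R n).
  rewrite derivM derivB deriv1 derivM derivX derivMn derivB derivM derivX !mul1r.
  by move=> <-; ring.
have factored : (1 - 'X * 'X) * ((1 - 'X * 'X) * (T n)^`()^`() - 'X * (T n)^`()
                                 + T n *+ (n * n)) = 0.
  transitivity ((1 - 'X * 'X) * (- ('X *+ 2) * (T n)^`() +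
      (1 - 'X * 'X) * (T n)^`()^`()) + 'X * ((1 - 'X * 'X) * (T n)^`())
      + (1 - 'X * 'X) * T n *+ (n * n)); first ring.
  rewrite dIdentity.
  transitivity (((1 - 'X * 'X) * T n + 'X * ((1 - 'X * 'X) * (T n)^`())
     - (1 - 'X * 'X) * (T n.+1)^`()) *+ n + 'X * ((1 - 'X * 'X) * (T n)^`())
      + (1 - 'X * 'X) * T n *+ (n * n)); first ring.
  by rewrite !chebT_deriv_identity chebTSS; ring.
by move/eqP: factored; rewrite mulf_eq0 (negbTE onemX2_neq0) => /eqP.
Qed.

Lemma chebT_ode_derivn n k :
  (1 - 'X * 'X) * (T n)^`(k.+2) - ('X * (T n)^`(k.+1)) *+ (2 * k + 1)
    + (T n)^`(k) *+ (n * n) - (T n)^`(k) *+ (k * k) = 0.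
Proof.
elim: k => [|k IH].
  by apply: etrans (chebT_ode n); rewrite !derivnS derivn0; ring.
rewrite -[RHS](deriv0 R) -{}IH.
rewrite !(derivD, derivB, derivN, derivMn, derivM, derivX, deriv1) -!derivnS.
by ring.
Qed.

End ChebyshevEquation.

Section ChebyshevNonnegative.
Variable R : numDomainType.
Local Notation T := (chebT R).

Inductive cheb_nonneg : {poly R} -> Prop :=
  | cheb_nonneg0 : cheb_nonneg 0
  | cheb_nonnegD q c j : cheb_nonneg q -> 0 <= c -> cheb_nonneg (q + c *: T j).

Lemma cheb_nonneg_add q1 q2 :
  cheb_nonneg q1 -> cheb_nonneg q2 -> cheb_nonneg (q1 + q2).
Proof.
move=> nn1; elim=> [|q c j _ IH c0]; first by rewrite addr0.
by rewrite addrA; apply: cheb_nonnegD.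
Qed.

Lemma cheb_nonneg_scale (c : R) q :
  0 <= c -> cheb_nonneg q -> cheb_nonneg (c *: q).
Proof.
move=> c0; elim=> [|r d j _ IH d0]; first by rewrite scaler0; apply: cheb_nonneg0.
by rewrite scalerDr scalerA; apply: cheb_nonnegD => //; apply: mulr_ge0.
Qed.

Lemma cheb_nonneg_T (c : R) j : 0 <= c -> cheb_nonneg (c *: T j).
Proof. by move=> c0; rewrite -[_ *: _]add0r; apply: cheb_nonnegD => //; apply: cheb_nonneg0. Qed.

Lemma cheb_nonneg_U n : cheb_nonneg (chebU R n).
Proof.
elim/nat_ind2: n => [||n IH0 _].
- by have := cheb_nonneg_T 1 0 ler01; rewrite scale1r chebT0 chebU0.
- by have := cheb_nonneg_T 2%:R 1 (ler0n R 2); rewrite scaler_nat chebT1 chebU1 mulr_natl.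
- rewrite chebU_T addrC mulr_natl -scaler_nat.
  by apply: cheb_nonneg_add => //; apply: cheb_nonneg_T; apply: ler0n.
Qed.

(* The class is stable under differentiation, because T_{j+1}' = (j+1) U_j. *)
Lemma cheb_nonneg_deriv q : cheb_nonneg q -> cheb_nonneg q^`().
Proof.
elim=> [|r c j _ IH c0]; first by rewrite deriv0; apply: cheb_nonneg0.
rewrite derivD derivZ; apply: cheb_nonneg_add => //.
case: j => [|j]; first by rewrite chebT0 deriv1 scaler0; apply: cheb_nonneg0.
rewrite deriv_chebT -scaler_nat scalerA.
by apply: cheb_nonneg_scale; [rewrite mulr_ge0 ?ler0n | apply: cheb_nonneg_U].
Qed.

Lemma cheb_nonneg_derivn p k : cheb_nonneg ((T p)^`(k)).
Proof.
elim: k => [|k IH]; last by rewrite derivnS; apply: cheb_nonneg_deriv.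
by rewrite derivn0 -[T p]scale1r; exact: (cheb_nonneg_T 1 p ler01).
Qed.

Lemma cheb_nonneg_norm_le q (x y : R) : cheb_nonneg q ->
  (forall j, `|(T j).[x]| <= (T j).[y]) -> `|q.[x]| <= q.[y].
Proof.
move=> nnq Txy; elim: nnq => [|r c j _ IH c0]; first by rewrite !horner0 normr0.
rewrite !hornerD !hornerZ (le_trans (ler_normD _ _)) // lerD // normrM (ger0_norm c0).
by rewrite ler_wpM2l.
Qed.

End ChebyshevNonnegative.

Section ValuesAtOne.
Variable R : numFieldType.
Local Notation T := (chebT R).

Definition chebT_d1 p k : R := ((T p)^`(k)).[1].

Lemma chebT_d1_ge0 p k : 0 <= chebT_d1 p k.
Proof.
rewrite /chebT_d1; apply: le_trans (normr_ge0 _) _.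
apply: (@cheb_nonneg_norm_le R _ 1 1 (cheb_nonneg_derivn R p k)) => j.
by rewrite chebT_at1 normr1.
Qed.

Lemma odd_natr_gt0 k : (0 : R) < (2 * k + 1)%:R.
Proof. by rewrite ltr0n addn1. Qed.

(* Evaluating the k-th derivative of Chebyshev's equation at 1. *)
Lemma chebT_d1S p k :
  chebT_d1 p k.+1 = (p%:R ^+ 2 - k%:R ^+ 2) / (2 * k + 1)%:R * chebT_d1 p k.
Proof.
have at1 := congr1 (horner^~ 1) (chebT_ode_derivn R p k).
rewrite !(hornerMn, hornerM, hornerE) in at1.
have lin : chebT_d1 p k.+1 * (2 * k + 1)%:R = (p%:R ^+ 2 - k%:R ^+ 2) * chebT_d1 p k.
  apply/eqP; rewrite eq_sym -subr_eq0; apply/eqP; apply: (etrans _ at1).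
  by rewrite /chebT_d1; ring.
by rewrite mulrAC -lin mulfK // gt_eqF // odd_natr_gt0.
Qed.

Lemma chebT_d1_prod p m :
  chebT_d1 p m = \prod_(l < m) ((p%:R ^+ 2 - l%:R ^+ 2) / (2 * l + 1)%:R).
Proof.
elim: m => [|m IH]; first by rewrite big_ord0 /chebT_d1 derivn0 chebT_at1.
by rewrite big_ord_recr /= chebT_d1S IH mulrC.
Qed.

(* Since a_k >= 0, each step multiplies a_k by at most p^2/(2k+1) <= p^2. *)
Lemma chebT_d1S_le p k :
  chebT_d1 p k.+1 <= p%:R ^+ 2 / (2 * k + 1)%:R * chebT_d1 p k.
Proof.
have inv_ge0 : 0 <= (2 * k + 1)%:R^-1 :> R by rewrite invr_ge0 ltW // odd_natr_gt0.
by rewrite chebT_d1S ler_wpM2r ?chebT_d1_ge0 // ler_wpM2r // gerBl exprn_ge0.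
Qed.

Lemma chebT_d1S_le_p2 p k : chebT_d1 p k.+1 <= p%:R ^+ 2 * chebT_d1 p k.
Proof.
apply: le_trans (chebT_d1S_le p k) _; rewrite ler_wpM2r ?chebT_d1_ge0 //.
rewrite -[leRHS]mulr1 ler_wpM2l ?exprn_ge0 // invf_le1 ?odd_natr_gt0 //.
by rewrite ler1n addn1.
Qed.

Lemma chebT_d1_le p m :
  chebT_d1 p m <= p%:R ^+ (2 * m) / \prod_(l < m) (2 * l + 1)%:R.
Proof.
elim: m => [|m IH]; first by rewrite big_ord0 /chebT_d1 derivn0 chebT_at1 expr0 divr1.
apply: le_trans (chebT_d1S_le p m) _.
apply: le_trans (ler_wpM2l _ IH) _.
  by rewrite divr_ge0 ?exprn_ge0 // ltW // odd_natr_gt0.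
have prod_gt0 : 0 < \prod_(l < m) (2 * l + 1)%:R :> R.
  by apply: prodr_gt0 => l _; apply: odd_natr_gt0.
have odd_gt0 := odd_natr_gt0 m.
rewrite big_ord_recr /= mulnS exprD le_eqVlt; apply/orP; left; apply/eqP.
by field; rewrite !gt_eqF.
Qed.

Lemma chebT_d1_shift p m i :
  chebT_d1 p (m + i) <= chebT_d1 p m * (p%:R ^+ 2) ^+ i.
Proof.
elim: i => [|i IH]; first by rewrite addn0 expr0 mulr1.
rewrite addnS; apply: le_trans (chebT_d1S_le_p2 p _) _.
by rewrite [(p%:R ^+ 2) ^+ i.+1]exprS mulrCA ler_wpM2l ?exprn_ge0.
Qed.

Lemma chebT_derivn_taylor p m (eps : R) N :
  (size ((T p)^`(m)) <= N)%N ->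
  ((T p)^`(m)).[1 + eps] = \sum_(i < N) chebT_d1 p (m + i) / i`!%:R * eps ^+ i.
Proof.
move=> sizeN; rewrite (nderiv_taylor_wide _ sizeN); last by rewrite /GRing.comm mulrC.
apply: eq_bigr => i _; congr (_ * _).
have fact_neq0 : i`!%:R != 0 :> R by rewrite pnatr_eq0 -lt0n fact_gt0.
rewrite /chebT_d1 derivn_add [(T p)^`(m)^`(i)]nderivn_def hornerMn -mulr_natr.
by rewrite mulfK.
Qed.

(* For eps >= 0 all Taylor terms are nonnegative; keep the first two. *)
Lemma chebT_derivn_ge_linear p m (eps : R) : 0 <= eps ->
  chebT_d1 p m + chebT_d1 p m.+1 * eps <= ((T p)^`(m)).[1 + eps].
Proof.
move=> eps0.
rewrite (@chebT_derivn_taylor p m eps (size ((T p)^`(m))).+2) ?leqW //.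
rewrite big_ord_recl big_ord_recl /= addrA addn0 addn1 !expr0 expr1 !mulr1 divr1.
rewrite /bump /= divr1 -[leLHS]addr0 lerD2l sumr_ge0 // => i _.
by rewrite mulr_ge0 ?exprn_ge0 // divr_ge0 ?chebT_d1_ge0.
Qed.

Lemma chebT_derivn_lower_bound p m (eps : R) : 0 <= eps ->
  (1 + (p%:R ^+ 2 - m%:R ^+ 2) / (2 * m + 1)%:R * eps) *
    \prod_(l < m) ((p%:R ^+ 2 - l%:R ^+ 2) / (2 * l + 1)%:R)
  <= ((T p)^`(m)).[1 + eps].
Proof.
move=> eps0; apply: le_trans (chebT_derivn_ge_linear p m eps eps0).
by rewrite -chebT_d1_prod chebT_d1S mulrDl mul1r mulrAC.
Qed.

End ValuesAtOne.

Section ChebyshevOutside.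
Variable R : realDomainType.
Local Notation T := (chebT R).

Lemma chebT_ge1 n {x : R} : 1 <= x -> 1 <= (T n).[x] <= (T n.+1).[x].
Proof.
move=> x1; elim: n => [|n /andP [Tn1 TnS]].
  by rewrite chebT0 chebT1 hornerX !hornerE lexx.
rewrite chebT_hornerSS (le_trans Tn1 TnS) /=; nra.
Qed.

Lemma chebT_norm_ge1 n (x : R) : 1 <= `|x| -> `|(T n).[x]| <= (T n).[`|x|].
Proof.
move=> x1; have /andP [T1 _] := chebT_ge1 n x1.
have T0 : 0 <= (T n).[`|x|] := le_trans ler01 T1.
have -> : `|(T n).[x]| = `|(T n).[`|x|]|.
  have [x0|x0] := leP 0 x; first by rewrite (ger0_norm x0).
  by rewrite (ltr0_norm x0) chebT_opp normrM normrX normrN1 expr1n mul1r.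
by rewrite ger0_norm.
Qed.

End ChebyshevOutside.

Section RealBounds.
Variable R : realType.
Local Notation T := (chebT R).

Lemma chebT_cos n (t : R) : (T n).[cos t] = cos (n%:R * t).
Proof.
elim/nat_ind2: n => [||n IH0 IH1]; first by rewrite chebT0 hornerE mul0r cos0.
  by rewrite chebT1 hornerX mul1r.
rewrite chebT_hornerSS IH0 IH1.
have -> : n.+2%:R * t = n.+1%:R * t + t by ring.
have -> : n%:R * t = n.+1%:R * t - t by ring.
by rewrite cosB cosD; ring.
Qed.

Lemma chebT_norm_le1 n (x : R) : `|x| <= 1 -> `|(T n).[x]| <= 1.
Proof.
move=> x1; have x_itv : x \in `[(-1), 1] by rewrite in_itv /=; rewrite ler_norml in x1.
by rewrite -(acosK x_itv) chebT_cos ler_norml cos_le1 cos_geN1.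
Qed.

Lemma cheb_nonneg_norm_near1 (q : {poly R}) (x d : R) : cheb_nonneg R q -> 0 <= d ->
  `|x| <= 1 + d -> exists2 e, 0 <= e <= d & `|q.[x]| <= q.[1 + e].
Proof.
move=> nnq d0 xd; have [x1|x1] := leP `|x| 1.
  exists 0; first by rewrite lexx d0.
  rewrite addr0; apply: (@cheb_nonneg_norm_le R _ _ _ nnq) => j.
  by rewrite chebT_at1 chebT_norm_le1.
exists (`|x| - 1); first by rewrite subr_ge0 (ltW x1) /= lerBlDl.
rewrite addrC subrK; apply: (@cheb_nonneg_norm_le R _ _ _ nnq) => j.
by rewrite chebT_norm_ge1 // ltW.
Qed.

Lemma expR_ge_partial_sum (x : R) n : 0 <= x ->
  \sum_(k < n) x ^+ k / k`!%:R <= expR x.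
Proof.
move=> x0; rewrite /expR.
have := @nondecreasing_cvgn_le R (series (exp_coeff x)) _ (is_cvg_series_exp_coeff x) n.
rewrite /series /= big_mkord; apply.
apply: (@nondecreasing_series R (exp_coeff x) xpredT 0) => k _ _.
by rewrite /exp_coeff /= divr_ge0 // exprn_ge0.
Qed.

(* Bounding a_{m+i} by a_m p^(2i) sums the Taylor series into an exponential. *)
Lemma chebT_derivn_le_exp p m (eps : R) : 0 <= eps ->
  ((T p)^`(m)).[1 + eps] <= chebT_d1 R p m * expR (p%:R ^+ 2 * eps).
Proof.
move=> eps0; rewrite (@chebT_derivn_taylor _ p m eps (size ((T p)^`(m)))) //.
apply: le_trans (_ : \sum_(i < size ((T p)^`(m)))
   chebT_d1 R p m * ((p%:R ^+ 2 * eps) ^+ i / i`!%:R) <= _).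
  apply: ler_sum => i _.
  rewrite (_ : chebT_d1 R p m * ((p%:R ^+ 2 * eps) ^+ i / i`!%:R) =
     chebT_d1 R p m * (p%:R ^+ 2) ^+ i / i`!%:R * eps ^+ i); last by rewrite exprMn; ring.
  by rewrite ler_wpM2r ?exprn_ge0 // ler_wpM2r ?invr_ge0 // chebT_d1_shift.
rewrite -big_distrr /= ler_wpM2l ?chebT_d1_ge0 // expR_ge_partial_sum //.
by rewrite mulr_ge0 ?exprn_ge0.
Qed.

Lemma chebT_derivn_sup_bound p m (nu x : R) : (1 <= p)%N -> 0 <= nu ->
  - (1 + nu / p%:R ^+ 2) < x < 1 + nu / p%:R ^+ 2 ->
  `|((T p)^`(m)).[x]| <= p%:R ^+ (2 * m) * expR nu / \prod_(l < m) (2 * l + 1)%:R.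
Proof.
move=> p1 nu0 x_bound.
have p2_gt0 : (0 : R) < p%:R ^+ 2 by rewrite exprn_gt0 // ltr0n.
have nup2_ge0 : 0 <= nu / p%:R ^+ 2 := divr_ge0 nu0 (ltW p2_gt0).
have x_le : `|x| <= 1 + nu / p%:R ^+ 2 by rewrite ltW // ltr_norml.
have [eps /andP [eps0 eps_le] at_shift] :=
  cheb_nonneg_norm_near1 _ _ _ (cheb_nonneg_derivn R p m) nup2_ge0 x_le.
apply: le_trans at_shift (le_trans (chebT_derivn_le_exp p m eps eps0) _).
rewrite [leRHS]mulrAC; apply: ler_pM; rewrite ?chebT_d1_ge0 ?expR_ge0 ?chebT_d1_le //.
rewrite ler_expR; apply: le_trans (ler_wpM2l (ltW p2_gt0) eps_le) _.
by rewrite mulrCA divff ?mulr1 // gt_eqF.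
Qed.

End RealBounds.

Theorem lemmaA1 (R : realType) (p m : nat) (nu : R) :
  (1 <= p)%N -> 0 <= nu <= 1 / 2 ->
  let delta : R := 1 + nu / (p%:R ^+ 2) in
  (* L^infty bound on (-delta, delta) *)
  (forall x : R, - delta < x < delta ->
     `|((chebT R p)^`(m)).[x]| <=
       p%:R ^+ (2 * m) * expR nu / \prod_(l < m) (2 * l + 1)%:R) /\
  (* lower bound at x = 1 + eps in [1, delta], for p >= m+1 *)
  (forall eps : R, 0 <= eps -> 1 + eps <= delta -> (m + 1 <= p)%N ->
     (1 + (p%:R ^+ 2 - m%:R ^+ 2) / (2 * m + 1)%:R * eps) *
       \prod_(l < m) ((p%:R ^+ 2 - l%:R ^+ 2) / (2 * l + 1)%:R)
     <= ((chebT R p)^`(m)).[1 + eps]) /\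
  1 + nu <= (chebT R p).[delta].
Proof.
move=> p1 /andP [nu0 _] delta.
split; [|split].
- by move=> x; apply: chebT_derivn_sup_bound.
- by move=> eps eps0 _ _; apply: chebT_derivn_lower_bound.
have eps0 : 0 <= nu / p%:R ^+ 2 by rewrite divr_ge0 ?exprn_ge0.
have := @chebT_derivn_lower_bound R p 0 _ eps0.
rewrite big_ord0 mulr1 derivn0; apply: le_trans.
rewrite le_eqVlt; apply/orP; left; apply/eqP.
by field; rewrite pnatr_eq0 -lt0n.
Qed.
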